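(* Let $\{G_i\}$ be a family of graphs with common induced subgraph $J$, embedded as $J_i\subseteq G_i$, such that $\{(G_i|J_i)\}$ is isometric, and let $H=\amalg\{(G_i|J_i)\}$. If every $G_i$ is connected and bipartite, then $\dim_l(H)=1$.
   Context: $d_G$ is shortest-path distance. A vertex $w$ distinguishes an edge $uv$ if $d(w,u)\neq d(w,v)$; $\dim_l(G)$ is the minimum size of a set $B\subseteq V(G)$ such that every edge of $G$ is distinguished by a vertex of $B$. $J$ is a common induced subgraph of each $G_i$ via injective maps $\iota_i:V(J)\to V(G_i)$ with $\iota_i(x)\iota_i(y)\in E(G_i)$ iff $xy\in E(J)$; $J_i$ is the induced image and $x^i=\iota_i(x)$. $H=\amalg\{(G_i|J_i)\}$ is obtained from the disjoint union of the $G_i$ by identifying, for each $x\in V(J)$, all $x^i$ into one vertex. The family is isometric if $d_{G_i}(a^i,b^i)=d_{G_j}(a^j,b^j)$ for all $i,j$ and $a,b\in V(J)$. *)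

From mathcomp Require Import all_boot.

Set Implicit Arguments.
Unset Strict Implicit.
Unset Printing Implicit Defensive.

Section Graphs.
Variable T : finType.
Implicit Types (e : rel T).

Definition simple_graph e := symmetric e /\ irreflexive e.

Fixpoint reach e (n : nat) (x : T) : {set T} :=
  if n is n'.+1 then
    reach e n' x :|: [set y | [exists z in reach e n' x, e z y]]
  else [set x].

(* shortest-path distance d(x,y): the least n < #|T| with y within n steps
   of x (every shortest path has length < #|T|); the value #|T| plays the
   role of "infinity" for unreachable y. *)
Definition dist e (x y : T) : nat :=
  find (fun n => y \in reach e n x) (iota 0 #|T|).

Definition connected e := forall x y : T, connect e x y.

Definition bipartite e :=
  exists c : T -> bool, forall u v, e u v -> c u != c v.

Definition distinguishes e (w u v : T) := dist e w u != dist e w v.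

Definition edge_resolving e (B : {set T}) : bool :=
  [forall u, forall v, e u v ==> [exists w in B, distinguishes e w u v]].

Definition edge_metric_dim e : nat :=
  \big[minn/#|T|]_(B : {set T} | edge_resolving e B) #|B|.

End Graphs.

Section Amalgam.
Variables (I : finType) (V : I -> finType) (VJ : finType)
          (E : forall i, rel (V i)) (iota_ : forall i, VJ -> V i).

Definition Vout (i : I) := {v : V i | v \notin codom (iota_ i)}.

(* vertex set of H: the vertices of J (each x standing for the identified
   class {x^i}) together with the disjoint union of the G_i - J_i *)
Definition amalgV : finType := (VJ + {i : I & Vout i})%type.

Definition toH (i : I) (v : V i) : amalgV :=
  match boolP (v \in codom (iota_ i)) with
  | AltTrue h => inl (iinv h)
  | AltFalse h => inr (Tagged Vout (exist _ v h : Vout i))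
  end.

Definition amalgE : rel amalgV := fun a b =>
  [exists i : I, exists u : V i, exists v : V i,
     [&& E u v, toH u == a & toH v == b]].

End Amalgam.

(** A single vertex [w] resolves every edge of a connected bipartite graph:
    along any shortest path the colour alternates, so the colour of [u] is
    the colour of [w] plus the parity of [dist w u], and the two ends of an
    edge have different colours, hence distances of different parity.
    The amalgam [H] is connected, and it is bipartite: colour each vertex of
    [G_i] by the parity of its distance to the image of a fixed vertex [x0]
    of [J]; by isometry these colourings agree on the identified vertices,
    so they glue to a proper colouring of [H]. Since [H] has an edge, its
    edge metric dimension is exactly one. *)
From mathcomp Require Import all_boot.

Set Implicit Arguments.
Unset Strict Implicit.
Unset Printing Implicit Defensive.

Section Distance.
Variables (T : finType) (e : rel T).

Lemma reach_last_path x p : path e x p -> last x p \in reach e (size p) x.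
Proof.
elim/last_ind: p => [|p z IHp]; first by rewrite /= set11.
rewrite rcons_path last_rcons size_rcons => /andP[/IHp xp ez] /=.
by apply/setUP; right; rewrite inE; apply/existsP; exists (last x p); rewrite xp.
Qed.

Lemma connect_reach x y :
  connect e x y -> exists2 k, k < #|T| & y \in reach e k x.
Proof.
case/connectP=> p xp ->; have [q xq uq _] := shortenP xp.
exists (size q); last exact: reach_last_path.
by have := max_card (mem (x :: q)); rewrite (card_uniqP uq).
Qed.

Lemma reach_dist x y : connect e x y -> y \in reach e (dist e x y) x.
Proof.
case/connect_reach=> k kT yk.
have has_k : has (fun n => y \in reach e n x) (iota 0 #|T|).
  by apply/hasP; exists k; rewrite ?mem_iota.
have := nth_find 0 has_k; rewrite nth_iota // -{2}(size_iota 0 #|T|).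
by rewrite -has_find.
Qed.

Lemma reach_lt_dist x y k : k < dist e x y -> y \notin reach e k x.
Proof.
move=> k_lt; have dist_le : dist e x y <= #|T|.
  by rewrite /dist -{2}(size_iota 0 #|T|) find_size.
by have := before_find 0 k_lt; rewrite nth_iota ?(leq_trans k_lt) // => ->.
Qed.

Section Colouring.
Variable c : T -> bool.
Hypothesis c_proper : forall u v, e u v -> c u != c v.

Lemma reach_parity x n y : y \in reach e n x ->
  (forall k, k < n -> y \notin reach e k x) -> c y = c x (+) odd n.
Proof.
elim: n y => [|n IHn] y /=; first by rewrite inE => /eqP-> _; rewrite addbF.
case/setUP=> [yn /(_ n (ltnSn n))|]; first by rewrite yn.
rewrite inE => /existsP[z /andP[zn ezy]] y_min.
have cz : c z = c x (+) odd n.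
  apply: IHn => // k kn; apply: contraNN (y_min k.+1 kn) => zk.
  by apply/setUP; right; rewrite inE; apply/existsP; exists z; rewrite zk.
by move: (c_proper ezy); rewrite cz; case: (c y) (c x) (odd n) => [] [] [].
Qed.

Lemma dist_parity x y : connect e x y -> c y = c x (+) odd (dist e x y).
Proof. by move=> xy; apply: reach_parity (reach_dist xy) _ => k; apply: reach_lt_dist. Qed.

End Colouring.

Lemma odd_dist_edge w u v : connected e -> bipartite e -> e u v ->
  odd (dist e w u) != odd (dist e w v).
Proof.
move=> conn [c c_proper] uv; apply: contraNneq (c_proper u v uv) => duv.
by rewrite (dist_parity c_proper (conn w u)) (dist_parity c_proper (conn w v)) duv.
Qed.

Lemma edge_resolving_set1 w : connected e -> bipartite e ->
  edge_resolving e [set w].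
Proof.
move=> conn bip; apply/forallP=> u; apply/forallP=> v; apply/implyP=> uv.
apply/existsP; exists w; rewrite set11 /=.
by apply: contra_neq (odd_dist_edge w conn bip uv) => ->.
Qed.

Lemma connected_edge : connected e -> 1 < #|T| -> exists u v, e u v.
Proof.
move=> conn /card_gt1P[u [v [_ _ uv]]].
case/connectP: (conn u v) => [[|z p]] /=; first by move=> _ eq_vu; rewrite eq_vu eqxx in uv.
by case/andP=> uz _ _; exists u, z.
Qed.

End Distance.

Lemma geq_bigminn_cond (I : eqType) (s : seq I) (P : pred I) (F : I -> nat) d i :
  i \in s -> P i -> \big[minn/d]_(j <- s | P j) F j <= F i.
Proof.
elim: s => //= a s IHs; rewrite in_cons big_cons => /orP[/eqP<-|/IHs le_s] Pi.
  by rewrite Pi geq_minl.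
by case: (P a); rewrite ?(leq_trans (geq_minr _ _)) ?le_s.
Qed.

Lemma edge_metric_dim_eq1 (T : finType) (e : rel T) :
  connected e -> bipartite e -> (exists u v, e u v) -> edge_metric_dim e = 1.
Proof.
move=> conn bip [u [v uv]]; apply/eqP; rewrite eqn_leq; apply/andP; split.
  rewrite -(cards1 u) /edge_metric_dim.
  by apply: geq_bigminn_cond; rewrite ?mem_index_enum ?edge_resolving_set1.
apply: (big_ind (fun n => 0 < n)) => [|m n m0 n0|B].
- by apply/card_gt0P; exists u.
- by rewrite leq_min m0 n0.
move/forallP/(_ u)/forallP/(_ v)/implyP/(_ uv)/existsP=> [w /andP[wB _]].
by apply/card_gt0P; exists w.
Qed.

Section Amalgam.
Unset Implicit Arguments.
Variables (I : finType) (V : I -> finType) (VJ : finType)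
  (E : forall i, rel (V i)) (iota_ : forall i, VJ -> V i).
Variables (i0 : I) (x0 : VJ).
Hypothesis iota_inj : forall i, injective (iota_ i).
Hypothesis conn : forall i, connected (E i).
Hypothesis bip : forall i, bipartite (E i).
Hypothesis isometric : forall i j (a b : VJ),
  dist (E i) (iota_ i a) (iota_ i b) = dist (E j) (iota_ j a) (iota_ j b).
Set Implicit Arguments.

Local Notation H := (@amalgE I V VJ E iota_).

Lemma toH_iota i x : toH iota_ (iota_ i x) = inl x.
Proof.
rewrite /toH; destruct (boolP (iota_ i x \in codom (iota_ i))) as [h|h];
  last by exfalso; rewrite codom_f in h.
by congr inl; apply: iota_inj; exact: f_iinv.
Qed.

Lemma toH_out i (v : V i) (h : v \notin codom (iota_ i)) :
  toH iota_ v = inr (Tagged (Vout iota_) (exist _ v h : Vout iota_ i)).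
Proof.
rewrite /toH; destruct (boolP (v \in codom (iota_ i))) as [h'|h'];
  first by exfalso; rewrite h' in h.
by do 2 f_equal; apply: val_inj.
Qed.

Lemma amalgE_toH i (u v : V i) : E i u v -> H (toH iota_ u) (toH iota_ v).
Proof.
by move=> uv; apply/existsP; exists i; apply/existsP; exists u; apply/existsP; exists v;
  rewrite uv !eqxx.
Qed.

Lemma connect_toH i (u v : V i) :
  connect (E i) u v -> connect H (toH iota_ u) (toH iota_ v).
Proof.
case/connectP=> p up ->; elim: p u up => [|z p IHp] u /=; first by rewrite connect0.
by case/andP=> uz zp; apply: connect_trans (connect1 (amalgE_toH uz)) (IHp z zp).
Qed.

Lemma toH_surj a : exists i (v : V i), toH iota_ v = a.
Proof.
case: a => [x|[i [v h]]]; first by exists i0, (iota_ i0 x); rewrite toH_iota.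
by exists i, v; rewrite toH_out.
Qed.

Lemma amalg_connected : connected H.
Proof.
move=> a b; have [i [u <-]] := toH_surj a; have [j [v <-]] := toH_surj b.
apply: (connect_trans (y := inl x0)).
  by rewrite -(toH_iota i x0); apply/connect_toH/conn.
by rewrite -(toH_iota j x0); apply/connect_toH/conn.
Qed.

Definition parity_x0 i (v : V i) := odd (dist (E i) (iota_ i x0) v).

Definition amalg_colour (a : amalgV iota_) : bool :=
  match a with
  | inl x => parity_x0 (iota_ i0 x)
  | inr t => parity_x0 (sval (tagged t))
  end.

Lemma amalg_colour_toH i (v : V i) : amalg_colour (toH iota_ v) = parity_x0 v.
Proof.
have [/codomP[x ->]|h] := boolP (v \in codom (iota_ i)); last by rewrite toH_out.
by rewrite toH_iota /= /parity_x0 (isometric i0 i).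
Qed.

Lemma amalg_bipartite : bipartite H.
Proof.
exists amalg_colour => _ _ /existsP[i /existsP[u /existsP[v /and3P[uv /eqP<- /eqP<-]]]].
by rewrite !amalg_colour_toH; apply: odd_dist_edge.
Qed.

Lemma amalg_has_edge : 1 < #|V i0| -> exists a b, H a b.
Proof.
by case/(connected_edge (conn i0))=> u [v uv]; exists (toH iota_ u), (toH iota_ v);
  apply: amalgE_toH.
Qed.

End Amalgam.

Theorem corollary1
  (I : finType) (V : I -> finType) (VJ : finType)
  (E : forall i, rel (V i)) (EJ : rel VJ) (iota_ : forall i, VJ -> V i) :
  0 < #|I| ->
  0 < #|VJ| ->
  simple_graph EJ ->
  (forall i, simple_graph (E i)) ->
  (forall i, 1 < #|V i|) ->
  (* J is an induced subgraph of each G_i via iota_ i *)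
  (forall i, injective (iota_ i)) ->
  (forall i x y, E i (iota_ i x) (iota_ i y) = EJ x y) ->
  (* the family is isometric *)
  (forall i j (a b : VJ),
      dist (E i) (iota_ i a) (iota_ i b) = dist (E j) (iota_ j a) (iota_ j b)) ->
  (forall i, connected (E i)) ->
  (forall i, bipartite (E i)) ->
  edge_metric_dim (@amalgE I V VJ E iota_) = 1.
Proof.
move=> /card_gt0P[i0 _] /card_gt0P[x0 _] _ _ V_gt1 inj _ iso conn bip.
apply: edge_metric_dim_eq1.
- exact: amalg_connected i0 x0 inj conn.
- exact: amalg_bipartite i0 x0 inj conn bip iso.
- exact: amalg_has_edge conn (V_gt1 i0).
Qed.
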